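(* Let $\ell$ be a prime, $L$ a finite extension of $\mathbb Q_\ell$, $\tau$ a field automorphism of $L$ of order $2$, $L^\tau$ its fixed field, $\lambda$ a uniformizer of $L^\tau$, $v_\lambda$ the valuation on $\overline{\mathbb Q_\ell}$ with $v_\lambda(\lambda)=1$, and $f$ the inertia degree of $L^\tau$ over $\mathbb Q_\ell$. Let $C=\{x\in\mathcal O_L^\times:x\tau(x)=1\}$ and $C(n)=\{x\in C:v_\lambda(x-1)\ge n\}$ for $n\ge 0$. If $\ell\neq2$, then $|C(0)/C(1)|=2\ell^f$ if $L/L^\tau$ is ramified and $|C(0)/C(1)|=\ell^f+1$ if $L/L^\tau$ is unramified. If $\ell=2$ and $0\le n\le v_\lambda(2)$, then $|C(n)/C(n+1)|\le 4^f$. *)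

From HB Require Import structures.
From mathcomp Require Import all_boot all_order all_algebra.
Set Implicit Arguments. Unset Strict Implicit. Unset Printing Implicit Defensive.
Import Order.TTheory GRing.Theory Num.Theory.
Local Open Scope ring_scope.

Definition num_classes (T : Type) (A : T -> Prop) (E : T -> T -> Prop)
    (k : nat) : Prop :=
  exists r : 'I_k -> T,
    [/\ forall i, A (r i),
        forall i j, E (r i) (r j) -> i = j
      & forall a, A a -> exists i, E a (r i)].

Section Valuation.
Variables (L : fieldType) (w : L -> int).

(* w is a normalized discrete valuation on L (w 0 is irrelevant: +oo) *)
Definition dvaluation : Prop :=
  [/\ forall x y, x != 0 -> y != 0 -> w (x * y) = w x + w y,
      forall x y, x != 0 -> y != 0 -> x + y != 0 ->
        w x <= w (x + y) \/ w y <= w (x + y)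
    & exists pi : L, pi != 0 /\ w pi = 1].

Definition vge (x : L) (n : int) : Prop := x = 0 \/ n <= w x.

Definition vcomplete : Prop :=
  forall a : nat -> L,
    (forall N : int, exists M : nat, forall m k : nat,
        (M <= m)%N -> (M <= k)%N -> vge (a m - a k) N) ->
    exists l : L, forall N : int, exists M : nat, forall m : nat,
        (M <= m)%N -> vge (a m - l) N.

Definition residue_card (k : nat) : Prop :=
  num_classes (fun x => vge x 0) (fun x y => vge (x - y) 1) k.

(* (L, w) is a finite extension of Q_ell with its normalized valuation:
   a complete discretely valued field of characteristic 0 whose residue
   field is finite of characteristic ell. *)
Definition finite_ext_Ql (ell : nat) : Prop :=
  [/\ dvaluation, vcomplete, (forall n : nat, n.+1%:R != 0 :> L),
      0 < w ell%:R & exists k, residue_card k].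

End Valuation.

Section Fixed.
Variables (L : fieldType) (w : L -> int) (tau : L -> L).

Definition fixedF (x : L) : Prop := tau x = x.

Definition uniformizer_fixed (lam : L) : Prop :=
  [/\ fixedF lam, lam != 0, 0 < w lam &
      forall x, fixedF x -> x != 0 -> 0 < w x -> w lam <= w x].

Definition inertia_deg_fixed (ell f : nat) : Prop :=
  num_classes (fun x => fixedF x /\ vge w x 0)
              (fun x y => vge w (x - y) 1) (ell ^ f).

(* C(n) = { x in O_L^x : x tau(x) = 1, v_lam(x - 1) >= n },
   where v_lam = w / w(lam) *)
Definition Cn (lam : L) (n : nat) (x : L) : Prop :=
  [/\ x != 0, w x = 0, x * tau x = 1 & vge w (x - 1) (n%:Z * w lam)].

Definition Cquot_card (lam : L) (n k : nat) : Prop :=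
  num_classes (Cn lam n) (fun x y => Cn lam n.+1 (x / y)) k.

End Fixed.

From HB Require Import structures.
From mathcomp Require Import all_boot all_order all_algebra.
From mathcomp Require Import zify ring.
From Stdlib Require Import ClassicalEpsilon Classical.
Set Implicit Arguments. Unset Strict Implicit. Unset Printing Implicit Defensive.
Import Order.TTheory GRing.Theory Num.Theory.
Local Open Scope ring_scope.

(* Write K = L^tau, q = ell^f and d = w(lam) in {1, 2}.  Since O_L is
   described algebraically (x is integral iff 1 + ell x^m is an m-th power,
   m = ell e + 1, by Hensel), tau preserves the valuation.  There is an
   "adapted" beta with O_L = O_K + O_K beta and w(a + b beta) =
   min(w a, w(b beta)): a uniformizer if d = 2, a lift of a residue not in
   the residue field of K if d = 1.  So O_L / lam O_L has q^2 classes
   r_i + r_j beta, and x |-> (x - 1)/lam^n embeds C(n)/C(n+1) into it.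
   For ell odd and d = 2 (beta = -tau beta, w beta = 1), the norm condition
   forces x = +-1 + r_j beta mod lam, and every such class is realised by a
   Cayley transform, giving 2q classes.  For d = 1, Hilbert 90 writes every
   x in C(0) as y / tau y with y a unit; the map y |-> y / tau y on the
   q^2 - 1 unit classes has fibres of size q - 1 (the nonzero residues of K),
   giving q + 1 classes. *)

Section Count.
Variables (T : Type) (A : T -> Prop) (E : T -> T -> Prop) (I : finType) (g : T -> I).
Hypothesis HE : forall a b, A a -> A b -> (E a b <-> g a = g b).

Lemma num_classes_card (S : {set I}) :
  (forall a, A a -> g a \in S) ->
  (forall s, s \in S -> exists a, A a /\ g a = s) ->
  num_classes A E #|S|.
Proof.
move=> HS Hsurj.
pose r (k : 'I_#|S|) := proj1_sig (constructive_indefinite_description _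
   (Hsurj _ (enum_valP k))).
have rP k : A (r k) /\ g (r k) = enum_val k.
  by rewrite /r; case: (constructive_indefinite_description _ _).
exists r; split.
- by move=> i; case: (rP i).
- move=> i j; case: (rP i) => Ai gi; case: (rP j) => Aj gj.
  by move/(HE Ai Aj); rewrite gi gj => /enum_val_inj.
- move=> a Aa; have Sa := HS a Aa.
  exists (enum_rank_in Sa (g a)).
  case: (rP (enum_rank_in Sa (g a))) => Ar gr.
  by apply/(HE Aa Ar); rewrite gr enum_rankK_in.
Qed.

Lemma num_classes_le_card : exists k, num_classes A E k /\ (k <= #|I|)%N.
Proof.
pose b s := if excluded_middle_informative (exists a, A a /\ g a = s) then true else false.
exists #|[set s | b s]|; split; last exact: max_card.
apply: num_classes_card => [a Aa|s]; rewrite inE /b.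
  by case: excluded_middle_informative => // [[]]; exists a.
by case: excluded_middle_informative.
Qed.

End Count.

Section Valuation.
Variables (L : fieldType) (w : L -> int).
Hypothesis Hdv : dvaluation w.
Local Notation vg := (vge w).

Lemma wM x y : x != 0 -> y != 0 -> w (x * y) = w x + w y.
Proof. by case: Hdv => H _ _; apply: H. Qed.

Lemma w1 : w 1 = 0.
Proof. have := wM (oner_neq0 L) (oner_neq0 L); rewrite mulr1; set a := w 1; lia. Qed.

Lemma wN1 : w (-1) = 0.
Proof.
have h : (-1 : L) != 0 by rewrite oppr_eq0 oner_eq0.
have := wM h h; rewrite mulrNN mulr1 w1; lia.
Qed.

Lemma wN x : w (- x) = w x.
Proof.
have [->|x0] := eqVneq x 0; first by rewrite oppr0.
have h : (-1 : L) != 0 by rewrite oppr_eq0 oner_eq0.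
by rewrite -mulN1r wM // wN1 add0r.
Qed.

Lemma wV x : x != 0 -> w x^-1 = - w x.
Proof. by move=> x0; have := wM x0 (invr_neq0 x0); rewrite mulfV // w1; lia. Qed.

Lemma wX x n : x != 0 -> w (x ^+ n) = n%:Z * w x.
Proof.
move=> x0; elim: n => [|n IH]; first by rewrite expr0 w1 mul0r.
rewrite exprS wM ?expf_neq0 // IH; lia.
Qed.

Lemma wdiv x y : x != 0 -> y != 0 -> w (x / y) = w x - w y.
Proof. by move=> x0 y0; rewrite wM ?invr_neq0 // wV. Qed.

Lemma wD_ge_min x y : x != 0 -> y != 0 -> x + y != 0 ->
  Order.min (w x) (w y) <= w (x + y).
Proof.
case: Hdv => _ H _ x0 y0 s0; case: (H x y x0 y0 s0) => h.
  by rewrite ge_min h.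
by rewrite ge_min h orbT.
Qed.

Lemma wD_lt x y : x != 0 -> y != 0 -> w x < w y -> w (x + y) = w x.
Proof.
move=> x0 y0 lt.
have s0 : x + y != 0.
  apply/negP=> /eqP h; have e : y = - x by apply/eqP; rewrite -addr_eq0 addrC h.
  by move: lt; rewrite e wN ltxx.
have h1 : w x <= w (x + y).
  have := wD_ge_min x0 y0 s0; rewrite ge_min => /orP [] h //; lia.
have ny0 : - y != 0 by rewrite oppr_eq0.
have e : (x + y) + (- y) = x by rewrite addrK.
have := wD_ge_min s0 ny0; rewrite e wN => /(_ x0); rewrite ge_min => /orP [] h2; lia.
Qed.

Lemma wD_neq a c : a != 0 -> c != 0 -> w a != w c ->
  a + c != 0 /\ w (a + c) = Order.min (w a) (w c).
Proof.
have sum_neq0 x y : x != 0 -> y != 0 -> w x < w y -> x + y != 0.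
  move=> x0 y0 lt; apply/negP => /eqP s0.
  have ey : y = - x by apply/eqP; rewrite -addr_eq0 addrC s0.
  by move: lt; rewrite ey wN ltxx.
move=> a0 c0; case: (ltgtP (w a) (w c)) => // h _.
  by rewrite sum_neq0 // wD_lt.
by rewrite addrC sum_neq0 // wD_lt.
Qed.

Lemma vgeW x n m : vg x n -> m <= n -> vg x m.
Proof. by move=> [->|h] mn; [left|right; apply: le_trans h]. Qed.

Lemma vge0 n : vg 0 n.
Proof. by left. Qed.

Lemma vge0_unit y : w y = 0 -> vg y 0.
Proof. by move=> wy; right; rewrite wy. Qed.

Lemma vge1 : vg 1 0.
Proof. by right; rewrite w1. Qed.

Lemma vgeN x n : vg x n -> vg (- x) n.
Proof. by move=> [->|h]; [left; rewrite oppr0|right; rewrite wN]. Qed.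

Lemma vgeNE x n : vg (- x) n <-> vg x n.
Proof. by split=> /vgeN //; rewrite opprK. Qed.

Lemma vgeD x y n : vg x n -> vg y n -> vg (x + y) n.
Proof.
move=> [->|hx]; first by rewrite add0r.
move=> [->|hy]; first by rewrite addr0; right.
have [s0|s0] := eqVneq (x + y) 0; first by left.
have [->|x0] := eqVneq x 0; first by rewrite add0r; right.
have [->|y0] := eqVneq y 0; first by rewrite addr0; right.
right; apply: le_trans (wD_ge_min x0 y0 s0); by rewrite le_min hx hy.
Qed.

Lemma vgeB x y n : vg x n -> vg y n -> vg (x - y) n.
Proof. by move=> hx hy; apply: vgeD => //; apply: vgeN. Qed.

Lemma vgeM x y n m : vg x n -> vg y m -> vg (x * y) (n + m).
Proof.
move=> [->|hx]; first by rewrite mul0r; left.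
move=> [->|hy]; first by rewrite mulr0; left.
have [->|x0] := eqVneq x 0; first by rewrite mul0r; left.
have [->|y0] := eqVneq y 0; first by rewrite mulr0; left.
right; rewrite wM //; lia.
Qed.

Lemma vgeMl x y n : vg x n -> vg y 0 -> vg (x * y) n.
Proof. by move=> hx hy; apply: vgeW (vgeM hx hy) _; rewrite addr0. Qed.

Lemma vgeMr x y n : vg x 0 -> vg y n -> vg (x * y) n.
Proof. by move=> hx hy; rewrite mulrC; apply: vgeMl. Qed.

Lemma vgeM0 x y : vg x 0 -> vg y 0 -> vg (x * y) 0.
Proof. exact: vgeMl. Qed.

Lemma vgeX0 x n : vg x 0 -> vg (x ^+ n) 0.
Proof.
move=> hx; elim: n => [|n IH]; first by rewrite expr0; exact: vge1.
by rewrite exprS; apply: vgeM0.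
Qed.

Lemma vge_nat n : vg n%:R 0.
Proof.
elim: n => [|n IH]; first by left.
by rewrite -addn1 natrD; apply: vgeD => //; exact: vge1.
Qed.

Lemma vge_unitM x y n : x != 0 -> w x = 0 -> vg (x * y) n <-> vg y n.
Proof.
move=> x0 wx; split.
  move=> [|h]; first by move/eqP; rewrite mulf_eq0 (negbTE x0) /= => /eqP ->; left.
  have [->|y0] := eqVneq y 0; first by left.
  by right; move: h; rewrite wM // wx add0r.
by move=> h; apply: vgeMr => //; right; rewrite wx.
Qed.

Lemma vge_eq0 x : (forall N, vg x N) -> x = 0.
Proof.
move=> h; have [//|x0] := eqVneq x 0.
case: (h (w x + 1)) => [//|]; lia.
Qed.

Lemma vge_subX x y N m : vg x 0 -> vg y 0 -> vg (x - y) N ->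
  vg (x ^+ m - y ^+ m) N.
Proof.
move=> hx hy hxy; elim: m => [|m IH]; first by rewrite !expr0 subrr; left.
have -> : x ^+ m.+1 - y ^+ m.+1 = x * (x ^+ m - y ^+ m) + (x - y) * y ^+ m.
  by rewrite !exprS; ring.
apply: vgeD; first by apply: vgeMr.
by apply: vgeMl => //; apply: vgeX0.
Qed.

Lemma expr1D_rem t m : vg t 0 ->
  exists2 Q, vg Q 0 & (1 + t) ^+ m - 1 - m%:R * t = t ^+ 2 * Q.
Proof.
move=> ht; elim: m => [|m [Q hQ e]].
  by exists 0; [left|rewrite expr0 mul0r mulr0 subrr sub0r oppr0].
exists ((1 + t) * Q + m%:R).
  apply: vgeD; last exact: vge_nat.
  by apply: vgeM0 => //; apply: vgeD => //; exact: vge1.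
have e' : (1 + t) ^+ m = t ^+ 2 * Q + 1 + m%:R * t by rewrite -e; ring.
rewrite exprS e' -[m.+1]addn1 natrD; ring.
Qed.

Lemma unitV x : x != 0 -> w x = 0 -> x^-1 != 0 /\ w x^-1 = 0.
Proof. by move=> x0 wx; rewrite invr_neq0 // wV // wx. Qed.

Lemma unit_of_sqr1 s : s * s = 1 -> s != 0 /\ w s = 0.
Proof.
move=> ss; have s0 : s != 0.
  by apply/negP => /eqP s0; move/eqP: ss; rewrite s0 mul0r eq_sym oner_eq0.
by split => //; have := wM s0 s0; rewrite ss w1; lia.
Qed.

Lemma unit_add1 t : vg t 1 -> 1 + t != 0 /\ w (1 + t) = 0.
Proof.
move=> [->|ht]; first by rewrite addr0 w1 oner_eq0.
have [->|t0] := eqVneq t 0; first by rewrite addr0 w1 oner_eq0.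
have h : w 1 < w t by rewrite w1; lia.
have e := wD_lt (oner_neq0 L) t0 h.
split; last by rewrite e w1.
apply/negP; rewrite addrC addr_eq0 => /eqP et; move: ht; rewrite et wN1; lia.
Qed.

Lemma unit_of_vge0 z : vg z 0 -> ~ vg z 1 -> z != 0 /\ w z = 0.
Proof.
move=> [->|h] h1; first by exfalso; apply: h1; left.
have z0 : z != 0 by apply/negP => /eqP e; apply: h1; left.
split => //; case: (lerP 1 (w z)) => h'; first by exfalso; apply: h1; right.
lia.
Qed.

Lemma vge1_mul u v : vg u 0 -> vg v 0 -> vg (u * v) 1 -> vg u 1 \/ vg v 1.
Proof.
move=> hu hv h; apply: NNPP => hn.
have [u0 wu] := unit_of_vge0 hu (fun x => hn (or_introl x)).
have [v0 wv] := unit_of_vge0 hv (fun x => hn (or_intror x)).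
case: h => [/eqP|h]; first by rewrite mulf_eq0 (negbTE u0) (negbTE v0).
by move: h; rewrite wM // wu wv.
Qed.

Hypothesis Hcomp : vcomplete w.

Section Newton.
Variables (m : nat) (a : L).
Hypotheses (m0 : (m%:R : L) != 0) (wm : w m%:R = 0) (ha : vg (a - 1) 1).

Fixpoint newton k : L :=
  if k is k'.+1 then newton k' * (1 + (a / newton k' ^+ m - 1) / m%:R) else 1.

Lemma newton_step_vge y k : y != 0 -> w y = 0 -> vg (y ^+ m - a) k ->
  vg ((a / y ^+ m - 1) / m%:R) k.
Proof.
move=> y0 wy hy.
have ym0 : y ^+ m != 0 by rewrite expf_neq0.
have [yi0 wyi] : (y ^+ m)^-1 != 0 /\ w (y ^+ m)^-1 = 0.
  by apply: unitV; rewrite // wX // wy mulr0.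
have [mi0 wmi] := unitV m0 wm.
have -> : (a / y ^+ m - 1) / m%:R = (a - y ^+ m) * (y ^+ m)^-1 * (m%:R)^-1.
  by rewrite [in RHS]mulrBl mulfV.
apply: vgeMl; last by right; rewrite wmi.
apply: vgeMl; last by right; rewrite wyi.
by rewrite -opprB; apply: vgeN.
Qed.

Lemma newtonP k :
  [/\ newton k != 0, w (newton k) = 0 & vg (newton k ^+ m - a) k.+1%:Z].
Proof.
elim: k => [|k [y0 wy hy]].
  split; [exact: oner_neq0|exact: w1|].
  by rewrite expr1n -opprB; apply: vgeN.
rewrite /=; set y := newton k in y0 wy hy *.
set t := (a / y ^+ m - 1) / m%:R.
have ht : vg t k.+1%:Z by apply: newton_step_vge.
have [t10 wt1] : 1 + t != 0 /\ w (1 + t) = 0 by apply: unit_add1; apply: vgeW ht _; lia.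
split; first by rewrite mulf_neq0.
  by rewrite wM // wy wt1.
have emt : m%:R * t = a / y ^+ m - 1 by rewrite /t mulrC divfK.
have ea : y ^+ m * (1 + m%:R * t) = a.
  by rewrite emt addrC subrK mulrC divfK // expf_neq0.
have [Q hQ eQ] : exists2 Q, vg Q 0 & (1 + t) ^+ m - 1 - m%:R * t = t ^+ 2 * Q.
  by apply: expr1D_rem; apply: vgeW ht _; lia.
have -> : (y * (1 + t)) ^+ m - a = y ^+ m * (t ^+ 2 * Q).
  by rewrite exprMn -ea -eQ; ring.
apply: vgeMr; first by right; rewrite wX // wy mulr0.
apply: vgeMl => //; rewrite expr2; apply: vgeW (vgeM ht ht) _; lia.
Qed.

Lemma newton_cauchy M n : (M <= n)%N -> vg (newton n - newton M) M.+1%:Z.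
Proof.
elim: n => [|n IH]; first by rewrite leqn0 => /eqP ->; rewrite subrr; left.
rewrite leq_eqVlt => /orP [/eqP ->|]; first by rewrite subrr; left.
rewrite ltnS => hMn.
have -> : newton n.+1 - newton M = (newton n.+1 - newton n) + (newton n - newton M).
  by rewrite addrA subrK.
apply: vgeD; last exact: IH.
have [y0 wy hy] := newtonP n.
rewrite /= mulrDr mulr1 addrC addKr.
apply: vgeMr; first by right; rewrite wy.
by apply: (@vgeW _ n.+1%:Z); [apply: newton_step_vge|lia].
Qed.

Lemma hensel_newton : exists y, y ^+ m = a.
Proof.
have [l hl] : exists l, forall N : int, exists M : nat, forall k : nat,
    (M <= k)%N -> vg (newton k - l) N.
  apply: Hcomp => N; exists `|N|%N => i j hi hj.
  have -> : newton i - newton j =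
      (newton i - newton `|N|%N) - (newton j - newton `|N|%N).
    by rewrite opprB addrA subrK.
  apply: vgeW (vgeB (newton_cauchy hi) (newton_cauchy hj)) _; lia.
exists l; apply/eqP; rewrite -subr_eq0; apply/eqP; apply: vge_eq0 => N.
have [M hM] := hl (Order.max N 0).
set k := maxn M `|N|%N.
have hk : vg (newton k - l) (Order.max N 0) by apply: hM; rewrite leq_maxl.
have [y0 wy hy] := newtonP k.
have hl0 : vg l 0.
  have -> : l = newton k - (newton k - l) by rewrite opprB addrC subrK.
  by apply: vgeB; [right; rewrite wy|apply: vgeW hk _; lia].
have -> : l ^+ m - a = - (newton k ^+ m - l ^+ m) + (newton k ^+ m - a).
  by rewrite opprB addrA subrK.
apply: vgeD; first apply: vgeN.
  by apply: vgeW (vge_subX m (vge0_unit wy) hl0 hk) _; lia.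
apply: vgeW hy _.
have : (`|N|%N <= k)%N by rewrite leq_maxr.
lia.
Qed.

End Newton.

Lemma hensel m a : (m%:R : L) != 0 -> w m%:R = 0 -> vg (a - 1) 1 ->
  exists y, y ^+ m = a.
Proof. exact: hensel_newton. Qed.

Section Automorphism.
Variables (ell : nat) (tau : {rmorphism L -> L}).
Hypothesis Hp : prime ell.
Hypotheses (Hchar : forall n : nat, n.+1%:R != 0 :> L) (Hell : 0 < w ell%:R).
Hypothesis Hinv : involutive tau.

Lemma nat_neq0 n : (0 < n)%N -> (n%:R : L) != 0.
Proof. by case: n => // n _; apply: Hchar. Qed.

Lemma w_natS_mul k : w ((ell * k).+1)%:R = 0.
Proof.
have [->|k0] := eqVneq k 0%N; first by rewrite muln0 w1.
rewrite -addn1 natrD addrC natrM.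
have l0 : (ell%:R : L) != 0 by apply: nat_neq0; apply: prime_gt0.
have kk0 : (k%:R : L) != 0 by apply: nat_neq0; rewrite lt0n.
have h : w 1 < w (ell%:R * k%:R : L).
  rewrite wM // w1; case: (vge_nat k) => [/eqP|]; first by rewrite (negbTE kk0).
  lia.
by rewrite wD_lt ?oner_neq0 ?mulf_neq0 // w1.
Qed.

Definition root_deg := (ell * `|w ell%:R|%N).+1.

(* The valuation ring is cut out by a field-theoretic condition: for
   w x < 0 the valuation of 1 + ell x^m is not divisible by m. *)
Lemma vge0_iff_root x : vg x 0 <-> exists y, y ^+ root_deg = 1 + ell%:R * x ^+ root_deg.
Proof.
have l0 : (ell%:R : L) != 0 by apply: nat_neq0; apply: prime_gt0.
split=> [hx|[y hy]].
  apply: hensel; [exact: Hchar|exact: w_natS_mul|].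
  rewrite addrAC subrr add0r; apply: vgeMl; [by right; lia|exact: vgeX0].
have [->|x0] := eqVneq x 0; first by left.
case: (lerP 0 (w x)) => [h|h]; first by right.
exfalso.
have ee : (`|w ell%:R|%N%:Z) = w ell%:R by lia.
have xm0 : x ^+ root_deg != 0 by rewrite expf_neq0.
have lx0 : ell%:R * x ^+ root_deg != 0 by rewrite mulf_neq0.
have hm : root_deg%:Z = ell%:Z * `|w ell%:R|%N%:Z + 1 by rewrite /root_deg; lia.
have wlx : w (ell%:R * x ^+ root_deg) =
    w ell%:R + (ell%:Z * `|w ell%:R|%N%:Z + 1) * w x by rewrite wM // wX // hm.
have hl : 2 <= ell%:Z by have := prime_gt1 Hp; lia.
have hneg : w (ell%:R * x ^+ root_deg) < w 1.
  rewrite wlx w1 -ee; nia.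
have ws : w (1 + ell%:R * x ^+ root_deg) = w (ell%:R * x ^+ root_deg).
  by rewrite addrC wD_lt // oner_neq0.
have y0 : y != 0.
  apply/negP => /eqP y0; move: hy; rewrite y0 expr0n /= => /eqP.
  rewrite eq_sym addrC addr_eq0 => /eqP e0; move: hneg; rewrite e0 wN1 w1.
  by rewrite ltxx.
move: ws; rewrite -hy wX // wlx hm -ee => e.
have hd : (ell%:Z * `|w ell%:R|%N%:Z + 1) * (w y - w x) = `|w ell%:R|%N%:Z by lia.
case: (lerP (w y - w x) 0) => hc; nia.
Qed.

Lemma tau_vge0 x : vg x 0 -> vg (tau x) 0.
Proof.
move=> /vge0_iff_root [y hy]; apply/vge0_iff_root; exists (tau y).
by rewrite -rmorphXn hy rmorphD rmorph1 rmorphM rmorph_nat rmorphXn.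
Qed.

Lemma tau_neq0 x : x != 0 -> tau x != 0.
Proof. by rewrite fmorph_eq0. Qed.

Lemma w_tau_unit x : x != 0 -> w x = 0 -> w (tau x) = 0.
Proof.
move=> x0 wx; have t0 := tau_neq0 x0.
have := tau_vge0 (vge0_unit wx); case=> [/eqP|h1]; first by rewrite (negbTE t0).
have := tau_vge0 (vge0_unit (_ : w x^-1 = 0)); rewrite wV // wx fmorphV.
case=> // [/eqP|h2]; first by rewrite invr_eq0 (negbTE t0).
by rewrite wV // oppr_ge0 in h2; apply/eqP; rewrite eq_le h2.
Qed.

Lemma w_tau x : w (tau x) = w x.
Proof.
have [->|x0] := eqVneq x 0; first by rewrite rmorph0.
case: Hdv => _ _ [pi [p0 wp]].
have tp0 := tau_neq0 p0.
pose k := w (tau pi).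
have G z : z != 0 -> 0 <= w z -> w (tau z) = w z * k.
  move=> z0 hz; set n := `|w z|%N; have pn0 : pi ^+ n != 0 by rewrite expf_neq0.
  have u0 : z / pi ^+ n != 0 by rewrite mulf_neq0 ?invr_neq0.
  have wu : w (z / pi ^+ n) = 0 by rewrite wdiv // wX // wp; lia.
  rewrite -(divfK pn0 z) rmorphM rmorphXn wM ?tau_neq0 ?expf_neq0 //.
  rewrite w_tau_unit // wX // /k wM // wu wX // wp; lia.
have k1 : k = 1.
  have k0 : 0 <= k.
    by case: (tau_vge0 (_ : vg pi 0)) => [|/eqP|//]; [right; rewrite wp|rewrite (negbTE tp0)].
  have := G _ tp0 k0; rewrite Hinv wp -/k => e; nia.
case: (lerP 0 (w x)) => hx; first by rewrite G // k1 mulr1.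
have xi0 : x^-1 != 0 by rewrite invr_neq0.
have := G _ xi0; rewrite wV // k1 mulr1 fmorphV wV ?tau_neq0 //.
by move=> h; have := h ltac:(lia); move/eqP; rewrite eqr_opp => /eqP.
Qed.

Lemma vge_tau x n : vg (tau x) n <-> vg x n.
Proof.
rewrite /vge w_tau; split=> [[h|h]|[h|h]]; [|by right|by left; rewrite h rmorph0|by right].
by left; apply: (fmorph_inj tau); rewrite h rmorph0.
Qed.

Variable lam : L.
Hypothesis Hu : uniformizer_fixed w tau lam.
Hypothesis Hnt : exists x : L, tau x != x.
Local Notation fx := (fixedF tau).
Local Notation d := (w lam).

Lemma fixed0 : fx 0. Proof. exact: rmorph0. Qed.
Lemma fixed1 : fx 1. Proof. exact: rmorph1. Qed.
Lemma fixedD x y : fx x -> fx y -> fx (x + y).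
Proof. by rewrite /fixedF rmorphD => -> ->. Qed.
Lemma fixedN x : fx x -> fx (- x).
Proof. by rewrite /fixedF rmorphN => ->. Qed.
Lemma fixedB x y : fx x -> fx y -> fx (x - y).
Proof. by move=> hx hy; apply: fixedD => //; apply: fixedN. Qed.
Lemma fixedM x y : fx x -> fx y -> fx (x * y).
Proof. by rewrite /fixedF rmorphM => -> ->. Qed.
Lemma fixedV x : fx x -> fx x^-1.
Proof. by rewrite /fixedF fmorphV => ->. Qed.
Lemma fixedX x n : fx x -> fx (x ^+ n).
Proof. by rewrite /fixedF rmorphXn => ->. Qed.
Lemma fixed_nat n : fx n%:R.
Proof. exact: rmorph_nat. Qed.
Lemma fixed_norm x : fx (x * tau x).
Proof. by rewrite /fixedF rmorphM Hinv mulrC. Qed.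

Lemma fixed_lam : fx lam. Proof. by case: Hu. Qed.
Lemma lam_neq0 : lam != 0. Proof. by case: Hu. Qed.
Lemma w_lam_gt0 : 0 < d. Proof. by case: Hu. Qed.
Lemma w_lam_min x : fx x -> x != 0 -> 0 < w x -> d <= w x.
Proof. by case: Hu => _ _ _; apply. Qed.

Lemma w_fixed_mult x : fx x -> x != 0 -> exists k : int, w x = k * d.
Proof.
have dvd_nat (n : nat) y : fx y -> y != 0 -> w y = n%:Z -> exists k : int, w y = k * d.
  elim/ltn_ind: n y => n IH y hy y0 wy.
  have [n0|n0] := eqVneq n 0%N; first by exists 0; rewrite wy n0 mul0r.
  have hd : d <= w y by apply: w_lam_min => //; rewrite wy; lia.
  have hd0 := w_lam_gt0.
  have z0 : y / lam != 0 by rewrite mulf_neq0 ?invr_neq0 ?lam_neq0.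
  have wz : w (y / lam) = `|w y - d|%N by rewrite wdiv ?lam_neq0 //; lia.
  have hz : fx (y / lam) by apply: fixedM => //; apply: fixedV; exact: fixed_lam.
  have [|k hk] := IH _ _ _ hz z0 wz; first by lia.
  by exists (k + 1); move: hk; rewrite wdiv ?lam_neq0 //; lia.
move=> hx x0; case: (lerP 0 (w x)) => h.
  by apply: (@dvd_nat `|w x|%N) => //; lia.
have xi0 : x^-1 != 0 by rewrite invr_neq0.
have [|k hk] := @dvd_nat `|w x^-1|%N _ (fixedV hx) xi0; first by rewrite wV //; lia.
by exists (- k); move: hk; rewrite wV //; lia.
Qed.

Lemma fixed_vge1 x : fx x -> vg x 1 -> vg x d.
Proof.
move=> hx [->|h]; first by left.
have [->|x0] := eqVneq x 0; first by left.
have [k hk] := w_fixed_mult hx x0; right; have := w_lam_gt0.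
by rewrite hk in h *; case: (lerP k 0) => ?; nia.
Qed.

Lemma fixed_vge0 x : fx x -> vg x (1 - d) -> vg x 0.
Proof.
move=> hx [->|h]; first by left.
have [->|x0] := eqVneq x 0; first by left.
have [k hk] := w_fixed_mult hx x0; right; have := w_lam_gt0.
by rewrite hk in h *; case: (lerP 0 k) => ?; nia.
Qed.

Lemma w_lam_cases : d = 1 \/ d = 2.
Proof.
case: Hdv => _ _ [pi [p0 wp]].
have N0 : pi * tau pi != 0 by rewrite mulf_neq0 ?tau_neq0.
have [k] := w_fixed_mult (fixed_norm pi) N0.
rewrite wM ?tau_neq0 // w_tau wp => hk.
have := w_lam_gt0 => hd0; case: (lerP k 0) => hk0; first by nia.
have : d <= 2 by nia.
lia.
Qed.

Lemma fixed_decomp beta z : tau beta != beta ->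
  exists a b, [/\ fx a, fx b & z = a + b * beta].
Proof.
move=> hb; have D0 : tau beta - beta != 0 by rewrite subr_eq0.
have D0' : beta - tau beta != 0 by rewrite subr_eq0 eq_sym.
exists ((tau beta * z - beta * tau z) / (tau beta - beta)).
exists ((tau z - z) / (tau beta - beta)); split.
- rewrite /fixedF fmorph_div !rmorphB !rmorphM !Hinv; field; by rewrite D0 D0'.
- rewrite /fixedF fmorph_div !rmorphB !Hinv; field; by rewrite D0 D0'.
- by field.
Qed.

(* beta generates O_L over O_K, and the valuation of a + b beta is read off
   from its two components. *)
Definition adapted (beta : L) := [/\ vg beta 0, tau beta != beta,
  (forall a b n, fx a -> fx b -> vg (a + b * beta) n -> vg a n /\ vg (b * beta) n)
 & (forall b, fx b -> vg (b * beta) 0 -> vg b 0)].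

Lemma vge_split_of_wD beta : beta != 0 ->
  (forall a b, fx a -> fx b -> a != 0 -> b != 0 ->
     a + b * beta != 0 /\ w (a + b * beta) = Order.min (w a) (w (b * beta))) ->
  forall a b n, fx a -> fx b -> vg (a + b * beta) n -> vg a n /\ vg (b * beta) n.
Proof.
move=> b0 H a b n ha hb.
have [->|a0] := eqVneq a 0; first by rewrite add0r => h; split => //; left.
have [->|bb0] := eqVneq b 0; first by rewrite mul0r addr0 => h; split => //; left.
have [s0 e] := H a b ha hb a0 bb0.
case=> [/eqP|h]; first by rewrite (negbTE s0).
by move: h; rewrite e le_min => /andP [h1 h2]; split; right.
Qed.

Lemma adapted_uniformizer pi : d = 2 -> pi != 0 -> w pi = 1 -> adapted pi.
Proof.
move=> d2 p0 wp; split.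
- by right; rewrite wp.
- apply/negP => /eqP hf; have [k hk] := w_fixed_mult hf p0.
  move: hk; rewrite wp d2; lia.
- apply: vge_split_of_wD => // a b ha hb a0 b0; apply: wD_neq => //.
    by rewrite mulf_neq0.
  have [k hk] := w_fixed_mult ha a0; have [k' hk'] := w_fixed_mult hb b0.
  rewrite wM // wp hk hk' d2; apply/eqP; lia.
- move=> b hb [/eqP|h]; first by rewrite mulf_eq0 (negbTE p0) orbF => /eqP ->; left.
  have [->|b0] := eqVneq b 0; first by left.
  apply: fixed_vge0 => //; right; move: h; rewrite wM // wp d2; lia.
Qed.

Definition nonresidue u := vg u 0 /\ forall c, fx c -> vg c 0 -> ~ vg (u - c) 1.

Lemma exists_vge0_not_fixed : exists2 z, vg z 0 & tau z != z.
Proof.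
case: Hnt => x hx; case: (lerP 0 (w x)) => h; first by exists x => //; right.
have [x0|x0] := eqVneq x 0; first by move: hx; rewrite x0 rmorph0 eqxx.
exists x^-1; first by right; rewrite wV //; lia.
by rewrite fmorphV; apply: contra hx => /eqP/invr_inj ->.
Qed.

(* If every residue came from K, successive lam-adic approximation by
   elements of K would make every integral z fixed by tau. *)
Lemma exists_nonresidue : d = 1 -> exists u, nonresidue u.
Proof.
move=> d1; apply: NNPP => hn.
have H z : vg z 0 -> exists c, [/\ fx c, vg c 0 & vg (z - c) 1].
  move=> hz; apply: NNPP => hc; apply: hn; exists z; split => // c h1 h2 h3.
  by apply: hc; exists c.
have A z : vg z 0 -> forall k : nat, exists s, [/\ fx s, vg s 0 & vg (z - s) k%:Z].
  move=> hz; elim=> [|k [s [hs hs0 hzs]]].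
    by exists 0; split; [exact: fixed0|left|rewrite subr0].
  have lk0 : lam ^+ k != 0 by rewrite expf_neq0 ?lam_neq0.
  have wlk : w (lam ^+ k) = k%:Z by rewrite wX ?lam_neq0 // d1 mulr1.
  set y := (z - s) / lam ^+ k.
  have hy : vg y 0.
    case: hzs => [e|h]; first by rewrite /y e mul0r; left.
    have [e|zs0] := eqVneq (z - s) 0; first by rewrite /y e mul0r; left.
    by right; rewrite /y wdiv // wlk; lia.
  have [c [hc hc0 hyc]] := H y hy.
  exists (s + lam ^+ k * c); split.
  - by apply: fixedD => //; apply: fixedM => //; apply: fixedX; exact: fixed_lam.
  - by apply: vgeD => //; apply: vgeM0 => //; right; rewrite wlk.
  - have -> : z - (s + lam ^+ k * c) = lam ^+ k * (y - c) by rewrite /y; field.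
    have -> : k.+1%:Z = k%:Z + 1 by lia.
    by apply: vgeM => //; right; rewrite wlk.
have [z hz] := exists_vge0_not_fixed; apply/negP; rewrite negbK eq_sym -subr_eq0.
apply/eqP; apply: vge_eq0 => N.
case: (lerP N 0) => hN; first by apply: vgeW (vgeB hz (tau_vge0 hz)) hN.
have [s [hs hs0 hzs]] := A z hz `|N|%N.
have -> : z - tau z = (z - s) - tau (z - s) by rewrite rmorphB hs opprB addrA subrK.
apply: vgeW (vgeB hzs (iffRL (vge_tau _ _) hzs)) _; lia.
Qed.

Lemma adapted_nonresidue u : d = 1 -> nonresidue u -> adapted u.
Proof.
move=> d1 [hu hnr].
have [u0 wu] : u != 0 /\ w u = 0.
  by apply: unit_of_vge0 => // h; apply: (hnr 0 fixed0 (vge0 _)); rewrite subr0.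
split => //.
- by apply/negP => /eqP hf; apply: (hnr u hf hu); rewrite subrr; left.
- apply: vge_split_of_wD => // a b ha hb a0 b0.
  case: (lerP (w b) (w a)) => hab; last first.
    apply: wD_neq => //; first by rewrite mulf_neq0.
    by rewrite wM // wu addr0; apply/eqP; lia.
  set t := a / b.
  have ht : fx t by apply: fixedM => //; apply: fixedV.
  have ht0 : vg t 0 by right; rewrite /t wdiv //; lia.
  have hnot := hnr (- t) (fixedN ht) (vgeN ht0); rewrite opprK in hnot.
  have [ut0 wut] := unit_of_vge0 (vgeD hu ht0) hnot.
  have e : a + b * u = b * (u + t) by rewrite /t; field.
  rewrite e mulf_neq0 // wM // wut addr0 wM // wu addr0.
  by split => //; rewrite min_r.
- by move=> b hb; rewrite mulrC => /(vge_unitM _ _ u0 wu).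
Qed.

Lemma exists_adapted : exists beta, adapted beta.
Proof.
case: w_lam_cases => hd.
  by have [u hu] := exists_nonresidue hd; exists u; apply: adapted_nonresidue.
by case: Hdv => _ _ [pi [p0 wp]]; exists pi; apply: adapted_uniformizer.
Qed.

Lemma two_neq0 : (2%:R : L) != 0. Proof. exact: Hchar. Qed.

Lemma w2_odd : ell != 2%N -> w 2%:R = 0.
Proof.
move=> h2; have ho : odd ell by case: (even_prime Hp) => // e; move: h2; rewrite e.
have e : (ell * 1).+1 = (2 * (ell./2).+1)%N.
  by rewrite muln1 -{1}(odd_double_half ell) ho /=; lia.
have k0' : ((ell./2).+1%:R : L) != 0 by exact: Hchar.
have := w_natS_mul 1; rewrite e natrM wM ?two_neq0 //.
have k0 : 0 <= w ((ell./2).+1%:R : L).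
  by case: (vge_nat (ell./2).+1) => [/eqP|//]; rewrite (negbTE k0').
have t0 : 0 <= w (2%:R : L).
  by case: (vge_nat 2) => [/eqP|//]; rewrite (negbTE two_neq0).
move=> hs; apply/eqP; rewrite eq_le t0 andbT.
have -> : w (2%:R : L) = - w ((ell./2).+1%:R : L) by apply/eqP; rewrite -addr_eq0 hs.
by rewrite oppr_le0.
Qed.

Lemma exists_anti_uniformizer : ell != 2%N -> d = 2 ->
  exists beta, [/\ adapted beta, tau beta = - beta & w beta = 1].
Proof.
move=> Hodd d2; case: Hdv => _ _ [pi [p0 wp]].
have w20 := w2_odd Hodd.
have hs : vg (pi + tau pi) 2.
  rewrite -d2; apply: fixed_vge1; first by rewrite /fixedF rmorphD Hinv addrC.
  by apply: vgeD; [|apply/vge_tau]; right; rewrite wp.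
have tp0 : 2%:R * pi != 0 by rewrite mulf_neq0 ?two_neq0.
have w2p : w (2%:R * pi) = 1 by rewrite wM ?two_neq0 // w20 wp.
have [b0 wb] : 2%:R * pi - (pi + tau pi) != 0 /\ w (2%:R * pi - (pi + tau pi)) = 1.
  have [e|s0] := eqVneq (pi + tau pi) 0; first by rewrite e subr0 tp0 w2p.
  have ns0 : - (pi + tau pi) != 0 by rewrite oppr_eq0.
  case: hs => [/eqP|hs]; first by rewrite (negbTE s0).
  have [|h1 h2] := wD_neq tp0 ns0; first by rewrite wN w2p; apply/eqP; lia.
  by rewrite h1 h2 wN w2p min_l //; lia.
have e : 2%:R * pi - (pi + tau pi) = pi - tau pi by ring.
rewrite e in b0 wb; exists (pi - tau pi); split => //.
- exact: adapted_uniformizer.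
- by rewrite rmorphB Hinv opprB.
Qed.

Lemma CnS_divP n x y : Cn w tau lam n x -> Cn w tau lam n y ->
  (Cn w tau lam n.+1 (x / y) <-> vg (x - y) (n.+1%:Z * d)).
Proof.
move=> [x0 wx nx hx] [y0 wy ny hy].
have [yi0 wyi] := unitV y0 wy.
have e : x / y - 1 = y^-1 * (x - y) by rewrite mulrBr mulVf // mulrC.
split=> [[_ _ _]|h]; first by rewrite e vge_unitM.
split.
- by rewrite mulf_neq0.
- by rewrite wdiv // wx wy subrr.
- by rewrite fmorph_div mulf_div nx ny divr1.
- by rewrite e vge_unitM.
Qed.

Lemma vge_div_lamX z n M : vg (z / lam ^+ n) M <-> vg z (M + n%:Z * d).
Proof.
have l0 : lam ^+ n != 0 by rewrite expf_neq0 ?lam_neq0.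
have wl : w (lam ^+ n) = n%:Z * d by rewrite wX ?lam_neq0.
have [->|z0] := eqVneq z 0; first by rewrite mul0r; split => _; left.
have zl0 : z / lam ^+ n != 0 by rewrite mulf_neq0 ?invr_neq0.
split=> [[e|h]|[e|h]].
- by move: zl0; rewrite e eqxx.
- by right; move: h; rewrite wdiv // wl; lia.
- by move: z0; rewrite e eqxx.
- by right; rewrite wdiv // wl; lia.
Qed.

Section Representatives.
Variables (f : nat) (r : 'I_(ell ^ f) -> L).
Hypothesis hrA : forall i, fx (r i) /\ vg (r i) 0.
Hypothesis hrE : forall i j, vg (r i - r j) 1 -> i = j.
Hypothesis hrC : forall a, fx a /\ vg a 0 -> exists i, vg (a - r i) 1.
Local Notation P := ('I_(ell ^ f) * 'I_(ell ^ f))%type.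

Lemma fixed_r i : fx (r i). Proof. by case: (hrA i). Qed.
Lemma vge0_r i : vg (r i) 0. Proof. by case: (hrA i). Qed.

Lemma q_gt0 : (0 < ell ^ f)%N.
Proof. by rewrite expn_gt0 prime_gt0. Qed.

Lemma q_ge2 : (2 <= ell ^ f)%N.
Proof.
have [iz hiz] := hrC (conj fixed0 (vge0 0)).
have [ip hip] := hrC (conj fixed1 vge1).
case: leqP => // q1; suff: vg 1 1 by case=> [/eqP|]; rewrite ?oner_eq0 // w1.
have eip : ip = iz by apply: ord_inj; move: (ltn_ord ip) (ltn_ord iz); lia.
have -> : (1 : L) = (1 - r ip) - (0 - r iz) by rewrite eip; ring.
exact: vgeB.
Qed.

Variable beta : L.
Hypothesis hg : adapted beta.

Lemma beta_vge0 : vg beta 0. Proof. by case: hg. Qed.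
Lemma beta_not_fixed : tau beta != beta. Proof. by case: hg. Qed.
Lemma beta_neq0 : beta != 0.
Proof. by apply: contraNneq beta_not_fixed => ->; rewrite rmorph0. Qed.

Lemma adapted_split a b n : fx a -> fx b -> vg (a + b * beta) n ->
  vg a n /\ vg (b * beta) n.
Proof. by case: hg => _ _ H _; apply: H. Qed.

Lemma adapted_div b : fx b -> vg (b * beta) 0 -> vg b 0.
Proof. by case: hg => _ _ _ H; apply: H. Qed.

Lemma adapted_div_lam b : fx b -> vg (b * beta) d -> vg b 1.
Proof.
move=> hb h.
have h' : vg (b / lam) 0.
  apply: adapted_div; first by apply: fixedM => //; apply: fixedV; exact: fixed_lam.
  have -> : b / lam * beta = (b * beta) / lam ^+ 1 by rewrite expr1 mulrAC.
  by apply/vge_div_lamX; rewrite add0r mul1r.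
have -> : b = (b / lam) * lam by rewrite divfK // lam_neq0.
apply: vgeW (vgeM h' (_ : vg lam d)) _; first by right.
by have := w_lam_gt0; lia.
Qed.

Definition rlift (p : P) := r p.1 + r p.2 * beta.

Lemma rlift_vge0 p : vg (rlift p) 0.
Proof. by apply: vgeD; [exact: vge0_r|apply: vgeM0; [exact: vge0_r|exact: beta_vge0]]. Qed.

Lemma resid_exists z : vg z 0 -> exists p : P, vg (z - rlift p) d.
Proof.
move=> hz; have [a [b [ha hb e]]] := fixed_decomp z beta_not_fixed.
have hz' : vg (a + b * beta) 0 by rewrite -e.
have [ha0 hbb0] := adapted_split ha hb hz'.
have [i hi] := hrC (conj ha ha0); have [j hj] := hrC (conj hb (adapted_div hb hbb0)).
exists (i, j); rewrite /rlift /= e.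
have -> : a + b * beta - (r i + r j * beta) = (a - r i) + (b - r j) * beta by ring.
apply: vgeD; first by apply: fixed_vge1 => //; apply: fixedB => //; exact: fixed_r.
apply: vgeMl; last exact: beta_vge0.
by apply: fixed_vge1 => //; apply: fixedB => //; exact: fixed_r.
Qed.

Lemma rlift_inj p p' : vg (rlift p - rlift p') d -> p = p'.
Proof.
case: p p' => i j [i' j']; rewrite /rlift /=.
have -> : r i + r j * beta - (r i' + r j' * beta) =
    (r i - r i') + (r j - r j') * beta by ring.
have fi := fixedB (fixed_r i) (fixed_r i'); have fj := fixedB (fixed_r j) (fixed_r j').
case/(adapted_split fi fj) => h1 h2.
have d1 : 1 <= d by have := w_lam_gt0; lia.
by rewrite (hrE (vgeW h1 d1)) (hrE (adapted_div_lam fj h2)).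
Qed.

(* The class of z in O_L / lam O_L as a pair of residues of K; meaningful
   only for integral z. *)
Definition resid (z : L) : P :=
  epsilon (inhabits (Ordinal q_gt0, Ordinal q_gt0)) (fun p => vg (z - rlift p) d).

Lemma residP z : vg z 0 -> vg (z - rlift (resid z)) d.
Proof. by move=> /resid_exists; apply: epsilon_spec. Qed.

Lemma resid_uniq z p : vg z 0 -> vg (z - rlift p) d -> resid z = p.
Proof.
move=> hz h; apply: rlift_inj.
have -> : rlift (resid z) - rlift p = (z - rlift p) - (z - rlift (resid z)) by ring.
by apply: vgeB => //; apply: residP.
Qed.

Lemma resid_eqP z z' : vg z 0 -> vg z' 0 -> (vg (z - z') d <-> resid z = resid z').
Proof.
move=> hz hz'; split=> [h|e].
  apply/esym/resid_uniq => //.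
  have -> : z' - rlift (resid z) = (z - rlift (resid z)) - (z - z') by ring.
  by apply: vgeB => //; apply: residP.
have -> : z - z' = (z - rlift (resid z)) - (z' - rlift (resid z')) by rewrite e; ring.
by apply: vgeB; apply: residP.
Qed.

Lemma Cquot_card_le n :
  exists k, Cquot_card w tau lam n k /\ (k <= ell ^ f * ell ^ f)%N.
Proof.
have HE x y : Cn w tau lam n x -> Cn w tau lam n y ->
    (Cn w tau lam n.+1 (x / y) <->
     resid ((x - 1) / lam ^+ n) = resid ((y - 1) / lam ^+ n)).
  move=> hx hy; rewrite CnS_divP //.
  have gx : vg ((x - 1) / lam ^+ n) 0 by apply/vge_div_lamX; rewrite add0r; case: hx.
  have gy : vg ((y - 1) / lam ^+ n) 0 by apply/vge_div_lamX; rewrite add0r; case: hy.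
  rewrite -resid_eqP //.
  have -> : (x - 1) / lam ^+ n - (y - 1) / lam ^+ n = (x - y) / lam ^+ n by ring.
  by rewrite vge_div_lamX (_ : d + n%:Z * d = n.+1%:Z * d) //; lia.
have [k [hk hk']] := num_classes_le_card HE.
by exists k; split => //; move: hk'; rewrite card_prod card_ord.
Qed.

Lemma Cn0_vge0 x : Cn w tau lam 0 x -> vg x 0.
Proof. by case=> _ wx _ _; exact: vge0_unit wx. Qed.

Lemma Cn0_resid_eqP x y : Cn w tau lam 0 x -> Cn w tau lam 0 y ->
  (Cn w tau lam 1 (x / y) <-> resid x = resid y).
Proof.
move=> hx hy; rewrite CnS_divP // mul1r.
exact: resid_eqP (Cn0_vge0 hx) (Cn0_vge0 hy).
Qed.

Section Ramified.
Hypotheses (Hodd : ell != 2%N) (d2 : d = 2) (tb : tau beta = - beta) (wb : w beta = 1).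

Lemma tau_rlift p : tau (rlift p) = r p.1 - r p.2 * beta.
Proof. by rewrite /rlift rmorphD rmorphM !fixed_r tb mulrN. Qed.

Section Signs.
Variables ip im : 'I_(ell ^ f).
Hypotheses (hip : vg (1 - r ip) 1) (him : vg (-1 - r im) 1).

(* Reducing x tau x = 1 modulo lam^2 leaves (1 - r_i)(1 + r_i) = 0 mod lam. *)
Lemma resid_C0_ram x : Cn w tau lam 0 x -> (resid x).1 \in [set ip; im].
Proof.
move=> hx; have := residP (Cn0_vge0 hx); rewrite d2.
case: hx => _ wx nx _; case: (resid x) => i j hp.
have ri := vge0_r i.
have rjb : vg (r j * beta) 0 by apply: vgeM0; [exact: vge0_r|exact: beta_vge0].
have hpt : vg (tau x - tau (rlift (i, j))) 2 by rewrite -rmorphB; apply/vge_tau.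
rewrite tau_rlift /= in hpt.
have h1 : vg (x * tau x - rlift (i, j) * (r i - r j * beta)) 2.
  have -> : x * tau x - rlift (i, j) * (r i - r j * beta) =
    x * (tau x - (r i - r j * beta)) + (x - rlift (i, j)) * (r i - r j * beta) by ring.
  apply: vgeD; first by apply: vgeMr => //; exact: vge0_unit wx.
  by apply: vgeMl => //; exact: vgeB ri rjb.
rewrite nx /rlift /= in h1.
have hb2 : vg (r j ^+ 2 * beta ^+ 2) 2.
  apply: vgeMr; first by apply: vgeX0; exact: vge0_r.
  by right; rewrite wX ?beta_neq0 // wb.
have h3 : vg ((1 - r i) * (1 + r i)) 1.
  have -> : (1 - r i) * (1 + r i) =
     (1 - (r i + r j * beta) * (r i - r j * beta)) - r j ^+ 2 * beta ^+ 2 by ring.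
  by apply: vgeW (vgeB h1 hb2) _.
rewrite !inE /=.
have [h|h] := vge1_mul (vgeB vge1 ri) (vgeD vge1 ri) h3.
  apply/orP; left; apply/eqP; apply: hrE.
  have -> : r i - r ip = (1 - r ip) - (1 - r i) by ring.
  exact: vgeB.
apply/orP; right; apply/eqP; apply: hrE.
have -> : r i - r im = (-1 - r im) + (1 + r i) by ring.
exact: vgeD.
Qed.

(* The Cayley transform of t beta: its norm is s^2 and it is congruent to
   s + 2 s t beta modulo lam^2. *)
Lemma cayley_C0 s t : fx s -> s * s = 1 -> fx t -> vg t 0 ->
  Cn w tau lam 0 (s * (1 + t * beta) / (1 - t * beta)).
Proof.
move=> sf ss tf tO; have [s0 ws] := unit_of_sqr1 ss.
have tb1 : vg (t * beta) 1 by apply: vgeMr tO _; right; rewrite wb.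
have [u10 wu1] := unit_add1 tb1; have [u20 wu2] := unit_add1 (vgeN tb1).
set x := s * (1 + t * beta) / (1 - t * beta).
have wx : w x = 0 by rewrite /x wdiv ?mulf_neq0 // wM // ws wu1 wu2.
split => //; first by rewrite /x !mulf_neq0 ?invr_neq0.
- have -> : tau x = s * (1 - t * beta) / (1 + t * beta).
    rewrite /x fmorph_div !rmorphM !rmorphD rmorphN rmorph1 rmorphM sf tf tb.
    by congr (_ / _); ring.
  rewrite -[RHS]ss /x; field; by rewrite u10 u20.
- by rewrite mul0r; apply: vgeB; [exact: vge0_unit wx|exact: vge1].
Qed.

Lemma cayley_sub s t : s * s = 1 -> vg t 0 ->
  vg (s * (1 + t * beta) / (1 - t * beta) - (s + 2%:R * s * t * beta)) 2.
Proof.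
move=> ss tO; have [s0 ws] := unit_of_sqr1 ss.
have tb1 : vg (t * beta) 1 by apply: vgeMr tO _; right; rewrite wb.
have [u20 wu2] := unit_add1 (vgeN tb1).
have -> : s * (1 + t * beta) / (1 - t * beta) - (s + 2%:R * s * t * beta) =
    (t * beta) ^+ 2 * (2%:R * s / (1 - t * beta)) by field; rewrite u20.
apply: vgeMl; first by rewrite expr2; apply: vgeW (vgeM tb1 tb1) _.
apply: vgeM0; first by apply: vgeM0; [exact: vge_nat|exact: vge0_unit ws].
by right; rewrite wV // wu2.
Qed.

Lemma C0_ram_witness i j : i \in [set ip; im] ->
  exists x, Cn w tau lam 0 x /\ resid x = (i, j).
Proof.
move=> hi; pose s : L := if i == ip then 1 else -1.
have sf : fx s by rewrite /s; case: ifP => _; [exact: fixed1|exact: (fixedN fixed1)].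
have ss : s * s = 1 by rewrite /s; case: ifP => _; rewrite ?mulrNN mulr1.
have [s0 ws] := unit_of_sqr1 ss.
have hs : vg (s - r i) 1.
  rewrite /s; case: ifP => [/eqP ->//|/negbT h].
  by move: hi; rewrite !inE (negbTE h) /= => /eqP ->.
have s20 : 2%:R * s != 0 by rewrite mulf_neq0 ?two_neq0.
pose t := r j / (2%:R * s).
have tf : fx t.
  by apply: fixedM; [exact: fixed_r|apply: fixedV; apply: fixedM => //; exact: fixed_nat].
have tO : vg t 0.
  apply: vgeMl; first exact: vge0_r.
  by right; rewrite wV // wM ?two_neq0 // w2_odd // ws.
have hx := cayley_C0 sf ss tf tO.
exists (s * (1 + t * beta) / (1 - t * beta)); split => //.
apply: resid_uniq; first exact: Cn0_vge0 hx.
have e : 2%:R * s * t = r j by rewrite /t mulrC divfK.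
rewrite d2 /rlift /=.
have -> : s * (1 + t * beta) / (1 - t * beta) - (r i + r j * beta) =
    (s * (1 + t * beta) / (1 - t * beta) - (s + 2%:R * s * t * beta)) + (s - r i).
  by rewrite e; ring.
apply: vgeD; first exact: cayley_sub ss tO.
by rewrite -d2; apply: fixed_vge1 (fixedB sf (fixed_r i)) hs.
Qed.

End Signs.

Lemma Cquot_card_ram : Cquot_card w tau lam 0 (2 * ell ^ f).
Proof.
have [ip hip] := hrC (conj fixed1 vge1).
have [im him] := hrC (conj (fixedN fixed1) (vgeN vge1)).
have nipm : ip != im.
  apply/negP => /eqP e; rewrite -e in him.
  have : vg 2%:R 1.
    have -> : (2%:R : L) = (1 - r ip) - (-1 - r ip) by ring.
    exact: vgeB.
  by case=> [/eqP|]; [rewrite (negbTE two_neq0)|rewrite w2_odd].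
have -> : (2 * ell ^ f)%N = #|setX [set ip; im] [set: 'I_(ell ^ f)]|.
  by rewrite cardsX cards2 nipm cardsT card_ord.
apply: (@num_classes_card _ _ _ _ resid); first exact: Cn0_resid_eqP.
  move=> x /(resid_C0_ram hip him); case: (resid x) => i j /= hi.
  by rewrite in_setX in_setT andbT.
by move=> [i j]; rewrite in_setX in_setT andbT; exact: C0_ram_witness.
Qed.

End Ramified.

Section Unramified.
Hypotheses (Hodd : ell != 2%N) (d1 : d = 1) (hnr : nonresidue beta).

Lemma not_vge1_sub_tau : ~ vg (beta - tau beta) 1.
Proof.
move=> h; case: hnr => hb H.
have [i20 wi2] := unitV two_neq0 (w2_odd Hodd).
have hc : fx ((beta + tau beta) / 2%:R).
  by rewrite /fixedF fmorph_div rmorphD Hinv rmorph_nat addrC.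
apply: (H _ hc).
  by apply: vgeMl; [apply: vgeD => //; apply: tau_vge0|right; rewrite wi2].
have -> : beta - (beta + tau beta) / 2%:R = (beta - tau beta) * (2%:R)^-1.
  by field; rewrite two_neq0.
by apply: vgeMl => //; right; rewrite wi2.
Qed.

Lemma vge1_sub_tau_fixed t : vg t 0 -> vg (t - tau t) 1 -> exists i, vg (t - r i) 1.
Proof.
move=> htO htt; have [a [b [ha hb et]]] := fixed_decomp t beta_not_fixed.
rewrite et in htO; have [ha0 hbb] := adapted_split ha hb htO.
have hb1 : vg b 1.
  have e1 : t - tau t = b * (beta - tau beta) by rewrite et rmorphD rmorphM ha hb; ring.
  rewrite e1 in htt; apply: NNPP => hn.
  have [bz wbz] := unit_of_vge0 (adapted_div hb hbb) hn.
  by apply: not_vge1_sub_tau; move: htt => /(vge_unitM _ _ bz wbz).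
have [i hi] := hrC (conj ha ha0); exists i.
have -> : t - r i = (a - r i) + b * beta by rewrite et; ring.
by apply: vgeD => //; apply: vgeMl => //; exact: beta_vge0.
Qed.

Lemma ratio_tau_unit y : y != 0 -> w y = 0 -> y / tau y != 0 /\ w (y / tau y) = 0.
Proof.
move=> y0 wy; have ty0 := tau_neq0 y0.
by rewrite mulf_neq0 ?invr_neq0 // wdiv // w_tau subrr.
Qed.

Lemma ratio_tau_C0 y : y != 0 -> w y = 0 -> Cn w tau lam 0 (y / tau y).
Proof.
move=> y0 wy; have [r0 wr] := ratio_tau_unit y0 wy; have ty0 := tau_neq0 y0.
split => //; first by rewrite fmorph_div Hinv; field; rewrite y0 ty0.
by rewrite mul0r; apply: vgeB; [exact: vge0_unit wr|exact: vge1].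
Qed.

Lemma ratio_tau_cong y y' : y != 0 -> w y = 0 -> y' != 0 -> w y' = 0 ->
  vg (y - y') 1 -> vg (y / tau y - y' / tau y') 1.
Proof.
move=> y0 wy y'0 wy' h.
have ty0 := tau_neq0 y0; have ty'0 := tau_neq0 y'0.
have -> : y / tau y - y' / tau y' =
  (y * (tau y' - tau y) + (y - y') * tau y) * (tau y * tau y')^-1.
  by field; rewrite ty0 ty'0.
apply: vgeMl; last first.
  have p0 : tau y * tau y' != 0 by rewrite mulf_neq0.
  by right; rewrite wV // wM // !w_tau wy wy'.
apply: vgeD.
  apply: vgeMr; first exact: vge0_unit wy.
  by rewrite -rmorphB; apply/vge_tau; rewrite -opprB; apply: vgeN.
by apply: vgeMl => //; apply: vge0_unit; rewrite w_tau.
Qed.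

Lemma hilbert_eq z x : x * tau x = 1 -> x * tau (z + x * tau z) = z + x * tau z.
Proof. by move=> nx; rewrite rmorphD rmorphM Hinv mulrDr mulrA nx mul1r addrC. Qed.

(* Hilbert 90: y = beta + x tau(beta) or y = 1 + x, whichever is a unit. *)
Lemma hilbert90 x : Cn w tau lam 0 x -> exists y, [/\ y != 0, w y = 0 & x = y / tau y].
Proof.
move=> hx; have hx0 := Cn0_vge0 hx; case: hx => x0 wx nx _.
have [y [hy hy1 e]] : exists y, [/\ vg y 0, ~ vg y 1 & x * tau y = y].
  have tb0 := tau_vge0 beta_vge0.
  case: (classic (vg (1 + x) 1)) => h.
    exists (beta + x * tau beta); split; last exact: hilbert_eq _ nx.
      by apply: vgeD; [exact: beta_vge0|exact: vgeM0].
    move=> h2; apply: not_vge1_sub_tau.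
    have -> : beta - tau beta = (beta + x * tau beta) - (1 + x) * tau beta by ring.
    by apply: vgeB => //; apply: vgeMl.
  exists (1 + x); split => //; first by apply: vgeD => //; exact: vge1.
  by have := hilbert_eq 1 nx; rewrite rmorph1 mulr1.
have [y0 wy] := unit_of_vge0 hy hy1.
by exists y; split => //; rewrite -{1}e mulfK // tau_neq0.
Qed.

Definition unit_classes : {set P} := [set~ resid 0].
Definition ratio_class (p : P) := resid (rlift p / tau (rlift p)).

Lemma rlift_unit p : p \in unit_classes -> rlift p != 0 /\ w (rlift p) = 0.
Proof.
rewrite !inE => hp; apply: unit_of_vge0; first exact: rlift_vge0.
move=> h; move/negP: hp; apply; apply/eqP.
have <- : resid (rlift p) = p by apply: resid_uniq; [exact: rlift_vge0|rewrite subrr; left].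
by apply/resid_eqP; [exact: rlift_vge0|exact: vge0|rewrite subr0 d1].
Qed.

Lemma ratio_class_C0 x : Cn w tau lam 0 x -> resid x \in ratio_class @: unit_classes.
Proof.
move=> hx; have [y [y0 wy e]] := hilbert90 hx.
have hy := vge0_unit wy.
have pP : resid y \in unit_classes.
  rewrite !inE; apply/negP => /eqP /(resid_eqP hy (vge0 0)).
  by rewrite subr0 d1; case=> [/eqP|]; rewrite ?(negbTE y0) // wy.
apply/imsetP; exists (resid y) => //.
have [c0 wc] := rlift_unit pP.
rewrite /ratio_class; apply/resid_eqP.
- by rewrite e; apply: vge0_unit; case: (ratio_tau_unit y0 wy).
- by apply: vge0_unit; case: (ratio_tau_unit c0 wc).
- rewrite e d1; apply: ratio_tau_cong => //.
  by have := residP hy; rewrite d1.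
Qed.

Lemma ratio_class_surj s : s \in ratio_class @: unit_classes ->
  exists a, Cn w tau lam 0 a /\ resid a = s.
Proof.
case/imsetP => p pP ->; have [c0 wc] := rlift_unit pP.
by exists (rlift p / tau (rlift p)); split => //; apply: ratio_tau_C0.
Qed.

Section Fibres.
Variable iz : 'I_(ell ^ f).
Hypothesis hiz : vg (r iz) 1.

Lemma r_unit i : i != iz -> r i != 0 /\ w (r i) = 0.
Proof.
move=> hi; apply: unit_of_vge0; first exact: vge0_r.
by move=> h; move/negP: hi; apply; apply/eqP; apply: hrE; apply: vgeB.
Qed.

(* c / tau c = c' / tau c' mod lam makes c / c' congruent to its conjugate,
   hence to a residue of K. *)
Lemma ratio_class_fibre_sub p p' : p \in unit_classes -> p' \in unit_classes ->
  ratio_class p = ratio_class p' -> exists2 i, i != iz & resid (r i * rlift p') = p.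
Proof.
move=> pP pP' hph; have [c0 wc] := rlift_unit pP; have [c0' wc'] := rlift_unit pP'.
rewrite /ratio_class in hph.
set c := rlift p in c0 wc hph *; set c' := rlift p' in c0' wc' hph *.
have hr : vg (c / tau c - c' / tau c') 1.
  rewrite -d1; apply/resid_eqP => //.
  + by apply: vge0_unit; case: (ratio_tau_unit c0 wc).
  + by apply: vge0_unit; case: (ratio_tau_unit c0' wc').
pose t := c / c'.
have wt : w t = 0 by rewrite /t wdiv // wc wc'.
have htt : vg (t - tau t) 1.
  have -> : t - tau t = (c / tau c - c' / tau c') * (tau c / c').
    by rewrite /t fmorph_div; field; rewrite c0' !tau_neq0.
  apply: vgeMl => //; apply: vge0_unit.
  by rewrite wdiv ?tau_neq0 // w_tau wc wc'.
have [i hti] := vge1_sub_tau_fixed (vge0_unit wt) htt.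
have hci : vg (c - r i * c') 1.
  have -> : c - r i * c' = (t - r i) * c' by rewrite /t mulrBl divfK.
  by apply: vgeMl => //; exact: vge0_unit wc'.
exists i.
  apply/negP => /eqP ei; rewrite ei in hci.
  have : vg c 1.
    have -> : c = (c - r iz * c') + r iz * c' by rewrite subrK.
    by apply: vgeD => //; apply: vgeMl => //; exact: vge0_unit wc'.
  by case=> [/eqP|]; rewrite ?(negbTE c0) // wc.
apply: resid_uniq; first by apply: vgeM0; [exact: vge0_r|exact: vge0_unit wc'].
by rewrite d1 -opprB; apply: vgeN.
Qed.

Lemma ratio_class_fibre_sup i p' : i != iz -> p' \in unit_classes ->
  resid (r i * rlift p') \in unit_classes /\
  ratio_class (resid (r i * rlift p')) = ratio_class p'.
Proof.
move=> hi pP'; have [ri0 wri] := r_unit hi; have [c0' wc'] := rlift_unit pP'.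
set z := r i * rlift p'.
have z0 : z != 0 by rewrite mulf_neq0.
have wz : w z = 0 by rewrite wM // wri wc'.
have hz := vge0_unit wz.
have hp := residP hz; rewrite d1 in hp.
have pP : resid z \in unit_classes.
  rewrite !inE; apply/negP => /eqP h.
  have : vg z 1.
    have -> : z = (z - rlift (resid 0)) + rlift (resid 0) by rewrite subrK.
    apply: vgeD; first by rewrite -h.
    by have := residP (vge0 0); rewrite d1 sub0r => /vgeN; rewrite opprK.
  by case=> [/eqP|]; rewrite ?(negbTE z0) // wz.
split => //; have [c0 wc] := rlift_unit pP.
rewrite /ratio_class; apply/resid_eqP.
- by apply: vge0_unit; case: (ratio_tau_unit c0 wc).
- by apply: vge0_unit; case: (ratio_tau_unit c0' wc').
have -> : rlift p' / tau (rlift p') = z / tau z.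
  by rewrite /z rmorphM fixed_r; field; rewrite ri0 tau_neq0.
rewrite d1; apply: ratio_tau_cong => //.
by rewrite -opprB; apply: vgeN.
Qed.

Lemma card_ratio_class_fibre p' : p' \in unit_classes ->
  #|[set p in unit_classes | ratio_class p == ratio_class p']| = (ell ^ f).-1.
Proof.
move=> pP'; have [c0' wc'] := rlift_unit pP'; have hc := vge0_unit wc'.
have inj : {in [set~ iz] &, injective (fun i => resid (r i * rlift p'))}.
  move=> i j _ _ /=.
  move/(resid_eqP (vgeM0 (vge0_r i) hc) (vgeM0 (vge0_r j) hc)).
  by rewrite d1 -mulrBl mulrC => /(vge_unitM _ _ c0' wc'); exact: hrE.
rewrite -[in RHS](card_ord (ell ^ f)) -(cardsC1 iz) -(card_in_imset inj).
apply: eq_card => p; rewrite in_set.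
apply/andP/imsetP => [[pP /eqP hph]|[i hi ->]].
  have [i hi e] := ratio_class_fibre_sub pP pP' hph.
  by exists i; rewrite ?inE ?e.
rewrite !inE in hi; have [pP e] := ratio_class_fibre_sup hi pP'.
by split; last apply/eqP.
Qed.

End Fibres.

Lemma card_ratio_class_image : #|ratio_class @: unit_classes| = (ell ^ f + 1)%N.
Proof.
have [iz] := hrC (conj fixed0 (vge0 0)); rewrite sub0r => /vgeNE hiz.
have e1 : #|unit_classes| = (ell ^ f * ell ^ f).-1.
  by rewrite cardsC1 card_prod card_ord.
have e2 : #|unit_classes| = \sum_(s in ratio_class @: unit_classes) (ell ^ f).-1.
  rewrite -sum1_card (partition_big_imset ratio_class) /=.
  apply: eq_bigr => s /imsetP [p' pP' ->].
  by rewrite sum1dep_card (card_ratio_class_fibre hiz).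
move: e2 q_ge2; rewrite sum_nat_const e1.
set q := (ell ^ f)%N; set k := #|_|; nia.
Qed.

Lemma Cquot_card_unram : Cquot_card w tau lam 0 (ell ^ f + 1).
Proof.
rewrite -card_ratio_class_image; apply: (@num_classes_card _ _ _ _ resid).
- exact: Cn0_resid_eqP.
- exact: ratio_class_C0.
- exact: ratio_class_surj.
Qed.

End Unramified.

End Representatives.

End Automorphism.
End Valuation.

Unset Implicit Arguments.

Theorem lemma6p3 (ell : nat) (L : fieldType) (w : L -> int)
    (tau : {rmorphism L -> L}) (lam : L) (f : nat) :
  prime ell ->
  finite_ext_Ql w ell ->
  involutive tau -> (exists x : L, tau x != x) ->
  uniformizer_fixed w tau lam ->
  inertia_deg_fixed w tau ell f ->
  [/\ (ell != 2)%N -> 1 < w lam ->                   (* L/L^tau ramified *)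
        Cquot_card w tau lam 0 (2 * ell ^ f),
      (ell != 2)%N -> w lam = 1 ->                   (* L/L^tau unramified *)
        Cquot_card w tau lam 0 (ell ^ f + 1)
    & ell = 2%N -> forall n : nat, n%:Z * w lam <= w 2%:R ->  (* n <= v_lam(2) *)
        exists k : nat, Cquot_card w tau lam n k /\ (k <= 4 ^ f)%N].
Proof.
move=> Hp [Hdv Hcomp Hchar Hell _] Hinv Hnt Hu [r [hrA hrE hrC]].
have hd := w_lam_cases Hdv Hcomp Hp Hchar Hell Hinv Hu.
split=> [Hodd hd1|Hodd d1|ell2 n _].
- have d2 : w lam = 2 by case: hd => // d1; rewrite d1 ltxx in hd1.
  have [beta [hb tb wb]] :=
    exists_anti_uniformizer Hdv Hcomp Hp Hchar Hell Hinv Hu Hodd d2.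
  exact: (Cquot_card_ram Hdv Hcomp Hp Hchar Hell Hinv Hu hrA hrE hrC hb Hodd d2 tb wb).
- have [u hu] := exists_nonresidue Hdv Hcomp Hp Hchar Hell Hinv Hu Hnt d1.
  have hb := adapted_nonresidue Hdv Hp Hell d1 hu.
  exact: (Cquot_card_unram Hdv Hcomp Hp Hchar Hell Hinv Hu hrA hrE hrC hb Hodd d1 hu).
- have [beta hb] := exists_adapted Hdv Hcomp Hp Hchar Hell Hinv Hu Hnt.
  have [k [hk hk']] := Cquot_card_le Hdv Hp Hell Hinv Hu hrA hrE hrC hb n.
  by exists k; split => //; move: hk'; rewrite ell2 -expnMn.
Qed.
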